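(* Let $n\in\mathbb{N}$, $h_0>0$, $h_1,\ldots,h_n\in\mathbb{C}$, and $H(z)\coloneq h_0+2\sum_{k=1}^nh_kz^k$. There is exactly one such polynomial $H$ (for given $h_0$) satisfying all of: $\operatorname{Re}H(z)>0$ for all $z\in\Delta$; $h_n>0$; the zeros of $\operatorname{Re}H$ on the unit circle are exactly the $n$-th roots of $-1$. Namely, $H(z)=h_0(1+z^n)$.
   Context: $\Delta=\{z\in\mathbb{C}:|z|<1\}$ is the open unit disk. *)

From HB Require Import structures.
From mathcomp Require Import all_boot all_order all_algebra.
From mathcomp Require Import complex.
From mathcomp Require Import reals.
Set Implicit Arguments. Unset Strict Implicit. Unset Printing Implicit Defensive.
Import Order.TTheory GRing.Theory Num.Theory.
Local Open Scope ring_scope.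
Local Open Scope complex_scope.

Definition Hpoly (R : rcfType) (n : nat) (h0 : R) (h : nat -> R[i]) (z : R[i]) : R[i] :=
  h0%:C + 2 * \sum_(1 <= k < n.+1) h k * z ^+ k.

(* Write H(z) = \sum_k c_k z^k.  Since Re H > 0 on the disk, Re H >= 0 on the unit
   circle, so at each zeta with zeta^n = -1 the function Re H attains its minimum 0
   on the circle: Re H(zeta) = 0 and the tangential derivative Im (zeta H'(zeta))
   vanishes.  As conj (zeta^k) = - zeta^(n-k) there, these two conditions say that
   H - H^* and zH' + (zH')^* vanish at zeta, where q^* = \sum_k conj (q_(n-k)) z^k.
   Both have degree at most n and vanish at the n distinct roots of z^n + 1, hence
   are multiples of z^n + 1.  Comparing coefficients gives c_k = conj c_(n-k) and
   n c_k = 0 for 0 < k < n, and Re c_0 = Re c_n, i.e. h_0 = 2 h_n.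
   The tangential condition needs no calculus: along the Cayley parametrization
   t |-> zeta (1 + it) / (1 - it) of the circle, Re H times a power of 1 + t^2 is a
   nonnegative real polynomial in t vanishing at 0, so its linear coefficient
   -2 Im (zeta H'(zeta)) vanishes. *)

From HB Require Import structures.
From mathcomp Require Import all_boot all_order all_algebra.
From mathcomp Require Import complex polyrcf separable ring lra.
From mathcomp Require Import reals.
Set Implicit Arguments.
Unset Strict Implicit.
Unset Printing Implicit Defensive.

Import Order.TTheory GRing.Theory Num.Theory.
Local Open Scope ring_scope.
Local Open Scope complex_scope.

Local Notation Re := (@complex.Re _).
Local Notation Im := (@complex.Im _).

Lemma poly_horner_inj (F : numDomainType) (p q : {poly F}) :
  (forall x, p.[x] = q.[x]) -> p = q.
Proof.
move=> pq; apply/eqP; rewrite -subr_eq0; apply/eqP.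
apply: (roots_geq_poly_eq0 (rs := [seq i%:R | i <- iota 0 (size (p - q))])).
- by apply/allP => x _; rewrite /root !hornerE pq subrr.
- by rewrite map_inj_uniq ?iota_uniq // => i j /eqP; rewrite eqr_nat => /eqP.
- by rewrite size_map size_iota.
Qed.

Lemma coef1M (F : comNzRingType) (p q : {poly F}) :
  (p * q)`_1 = p`_0 * q`_1 + p`_1 * q`_0.
Proof. by rewrite coefM big_ord_recr big_ord1. Qed.

Lemma coef0_exp (F : comNzRingType) (q : {poly F}) m : q`_0 = 1 -> (q ^+ m)`_0 = 1.
Proof. by rewrite -!horner_coef0 horner_exp => ->; rewrite expr1n. Qed.

Lemma coef1_exp (F : comNzRingType) (q : {poly F}) m :
  q`_0 = 1 -> (q ^+ m)`_1 = q`_1 *+ m.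
Proof.
move=> q0; elim: m => [|m IHm]; first by rewrite expr0 coef1 mulr0n.
by rewrite exprS coef1M IHm coef0_exp // q0 mul1r mulr1 mulrSr.
Qed.

Lemma coef_derivMX (F : nzRingType) (p : {poly F}) k : (p^`() * 'X)`_k = p`_k *+ k.
Proof. by rewrite coefMX; case: k => [|k] //=; rewrite coef_deriv. Qed.

Lemma size_derivMX (F : nzRingType) (p : {poly F}) : (size (p^`() * 'X)%R <= size p)%N.
Proof. by apply/leq_sizeP => j j_ge; rewrite coef_derivMX nth_default ?mul0rn. Qed.

Lemma horner_derivMX (F : comNzRingType) (p : {poly F}) x :
  p^`().[x] * x = \sum_(k < size p) p`_k *+ k * x ^+ k.
Proof.
rewrite -hornerMX (horner_coef_wide _ (size_derivMX p)).
by apply: eq_bigr => k _; rewrite coef_derivMX.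
Qed.

Lemma coef1_eq0_of_poly_ge0 (R : rcfType) (g : {poly R}) :
  (forall t, 0 <= g.[t]) -> g.[0] = 0 -> g`_1 = 0.
Proof.
move=> g_ge0 g0.
have /factor_theorem [q gE] : root g 0 by apply/rootP.
have gqE t : g.[t] = q.[t] * t by rewrite gE subr0 hornerMX.
have -> : g`_1 = q.[0] by rewrite gE subr0 coefMX horner_coef0.
(* q keeps the sign of q(0) near 0, so g(t) = q(t) t would change sign at 0. *)
apply/eqP; apply: contraT => q0_neq0.
have [|d d_gt0 near_q0] := poly_cont 0 q (_ : 0 < `|q.[0]|); first by rewrite normr_gt0.
pose e := d / 2.
have e_gt0 : 0 < e by rewrite divr_gt0.
have e_lt_d : `|e| < d by rewrite gtr0_norm // ltr_pdivrMr // ltr_pMr // ltr1n.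
have := near_q0 e; rewrite subr0 => /(_ e_lt_d); rewrite ltr_distl => /andP[_ q_e_lt].
have := near_q0 (- e); rewrite subr0 normrN => /(_ e_lt_d).
rewrite ltr_distl => /andP[q_Ne_gt _].
have := g_ge0 e; have := g_ge0 (- e); rewrite !gqE mulrN oppr_ge0.
rewrite pmulr_lge0 // pmulr_lle0 // => q_Ne_le0 q_e_ge0.
have [q0_ge0|q0_lt0] := leP 0 q.[0].
  by move: q_Ne_gt; rewrite ger0_norm //; lra.
by move: q_e_lt; rewrite ltr0_norm //; lra.
Qed.

Section ComplexFacts.
Variable R : rcfType.
Implicit Types (w : R[i]) (r t : R).

Lemma Re_realCM r w : Re (r%:C * w) = r * Re w.
Proof. by case: w => a b; simpc. Qed.

Lemma Re_conjc w : Re w^* = Re w.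
Proof. by case: w. Qed.

Lemma horner_map_Re (p : {poly R[i]}) t : (map_poly Re p).[t] = Re p.[t%:C].
Proof.
have size_map : (size (map_poly Re p) <= size p)%N := size_poly _ _.
rewrite (horner_coef_wide _ size_map) horner_coef raddf_sum.
by apply: eq_bigr => k _; rewrite coef_map_id0 //= -rmorphXn [_ * _%:C]mulrC Re_realCM mulrC.
Qed.

Lemma Re_1D_gt0 w : `|w| < 1 -> 0 < Re (1 + w).
Proof.
move=> w_lt1; have := le_lt_trans (normc_ge_Re w) w_lt1.
rewrite -(rmorph1 (real_complex R)) ltcR ltr_norml => /andP[Rew_gt _].
by rewrite raddfD /=; lra.
Qed.

Lemma norm1_ReN1 w : `|w| = 1 -> Re w = -1 -> w = -1.
Proof.
move=> w1 Rew; have := add_Re2_Im2 w; rewrite w1 expr1n Rew sqrrN expr1n.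
rewrite -(rmorph1 (real_complex R)) => /complexI /eqP.
rewrite addrC -subr_eq0 addrK sqrf_eq0 => /eqP Imw.
by case: w {w1} Rew Imw => a b /= -> ->; rewrite -oppr0.
Qed.

End ComplexFacts.

Lemma Re_horner_ge0_unit_circle (R : rcfType) (p : {poly R[i]}) :
  (forall z, `|z| < 1 -> 0 < Re p.[z]) -> forall z, `|z| = 1 -> 0 <= Re p.[z].
Proof.
move=> Re_gt0 z z1; rewrite leNgt; apply/negP => Re_lt0.
pose q := map_poly Re (p \Po (z *: 'X)).
have qE t : q.[t] = Re p.[t%:C * z].
  by rewrite horner_map_Re horner_comp hornerZ hornerX mulrC.
have q0_gt0 : 0 < q.[0] by rewrite qE rmorph0 mul0r Re_gt0 ?normr0.
have [|x /[!in_itv] /andP[x_gt0 x_lt1] /rootP] := poly_ivtoo (p := q) ler01.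
  by rewrite pmulr_rlt0 // qE rmorph1 mul1r.
rewrite qE => Re_eq0.
have xz_lt1 : `|x%:C * z| < 1.
  by rewrite normrM z1 mulr1 gtr0_norm ?ltcR // -[1]/(1%:C) ltcR.
by have := Re_gt0 _ xz_lt1; rewrite Re_eq0 ltxx.
Qed.

Section CayleyTransform.
Variables (R : rcfType) (p : {poly R[i]}) (z : R[i]).

Definition cayley_poly : {poly R[i]} :=
  \sum_(k < size p) (p`_k * z ^+ k) *:
    ((1 + 'i *: 'X) ^+ (size p + k) * (1 - 'i *: 'X) ^+ (size p - k)).

Lemma horner_cayley_poly (t : R) :
  cayley_poly.[t%:C] =
    ((1 + t ^+ 2) ^+ size p)%:C * p.[z * ((1 + 'i * t%:C) / (1 - 'i * t%:C))].
Proof.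
set u := 1 + 'i * t%:C; set v := 1 - 'i * t%:C.
have v_neq0 : v != 0 by rewrite /v; simpc; rewrite eq_complex /= oner_eq0.
have uvE : u * v = (1 + t ^+ 2)%:C by rewrite /u /v; simpc; rewrite addNr expr2.
rewrite [p.[_]]horner_coef mulr_sumr horner_sum; apply: eq_bigr => -[k /= /ltnW k_le] _.
rewrite hornerZ hornerM !horner_exp !hornerD hornerN !hornerZ hornerX !hornerC -/u -/v.
by rewrite rmorphXn /= -uvE exprD exprB ?unitfE ?expf_neq0 // !exprMn exprVn; ring.
Qed.

Lemma Re_cayley_poly_coef1 : Re cayley_poly`_1 = - Im (p^`().[z] * z) *+ 2.
Proof.
rewrite horner_derivMX coef_sum !raddf_sum -sumrMnl.
apply: eq_bigr => -[k /= /ltnW k_le] _.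
have coef_1DZX (a : R[i]) : (1 + a *: 'X)`_0 = 1 /\ (1 + a *: 'X)`_1 = a.
  by rewrite !coefD !coef1 !coefZ !coefX /= mulr0 mulr1 addr0 add0r.
have [iX0 iX1] := coef_1DZX 'i; have [NiX0 NiX1] := coef_1DZX (- 'i).
rewrite scaleNr in NiX0 NiX1.
rewrite coefZ coef1M !coef1_exp ?coef0_exp // iX1 NiX1 mul1r mulr1.
rewrite mulrDr !mulrnAr mulrN !raddfD !raddfMn raddfN /= !ReiNIm opprK mulrnAl raddfMn /=.
by rewrite -{2}(subnK k_le) mulrnDr !mulNrn mulr2n; lra.
Qed.

Lemma Im_derivM_Re_min_unit_circle :
  (forall w, `|w| = 1 -> 0 <= Re p.[w]) -> `|z| = 1 -> Re p.[z] = 0 ->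
  Im (p^`().[z] * z) = 0.
Proof.
move=> Re_ge0 z1 Re_eq0; pose g := map_poly Re cayley_poly.
have g_ge0 t : 0 <= g.[t].
  rewrite horner_map_Re horner_cayley_poly Re_realCM.
  rewrite mulr_ge0 ?exprn_ge0 ?addr_ge0 ?sqr_ge0 //.
  apply: Re_ge0; rewrite normrM z1 mul1r normf_div.
  have -> : 1 - 'i * t%:C = (1 + 'i * t%:C)^* by simpc.
  by rewrite normcJ divff // normr_eq0; simpc; rewrite eq_complex /= oner_eq0.
have g0 : g.[0] = 0.
  rewrite horner_map_Re horner_cayley_poly rmorph0 mulr0 addr0 subr0 divr1.
  by rewrite mulr1 expr0n addr0 expr1n mul1r.
have := coef1_eq0_of_poly_ge0 g_ge0 g0; rewrite coef_map_id0 //= Re_cayley_poly_coef1.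
by move=> /eqP; rewrite mulrn_eq0 oppr_eq0 /= => /eqP.
Qed.

End CayleyTransform.

Section PolyVanishingOnRootsN1.
Variables (F : closedFieldType) (n : nat).
Hypothesis n_neq0 : n%:R != 0 :> F.

Let n_gt0 : (0 < n)%N.
Proof. by rewrite lt0n; apply: contraNneq n_neq0 => ->. Qed.

Lemma separable_XnD1 : separable_poly ('X^n + 1 : {poly F}).
Proof.
case: n n_neq0 => [/eqP//|m m_neq0]; rewrite unlock derivD derivC addr0.
rewrite derivXn -scaler_nat coprimepZr //= exprS coprimep_sym.
by rewrite coprimep_addl_mul coprimep1.
Qed.

Lemma poly_eq_XnD1 (p : {poly F}) : (size p <= n.+1)%N ->
  (forall z, z ^+ n = -1 -> p.[z] = 0) -> p = p`_n *: ('X^n + 1).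
Proof.
move=> size_p p_roots.
have [rs XnD1E] := closed_field_poly_normal ('X^n + 1 : {poly F}).
rewrite lead_coefXnaddC // scale1r in XnD1E.
apply/eqP; rewrite -subr_eq0; apply/eqP/(roots_geq_poly_eq0 (rs := rs)).
- apply/allP => r; rewrite -root_prod_XsubC -XnD1E rootE !hornerE addr_eq0 => /eqP r_root.
  by rewrite /root !hornerE p_roots // r_root addNr mulr0 subr0.
- by rewrite -separable_prod_XsubC -XnD1E; apply: separable_XnD1.
- have /eqP : size ('X^n + 1 : {poly F}) = (size rs).+1.
    by rewrite XnD1E size_prod_XsubC.
  rewrite size_XnaddC // eqSS => /eqP <-.
  apply/leq_sizeP => j; rewrite leq_eqVlt => /orP[/eqP <-|n_lt_j].
    by rewrite coefB coefZ coefD coefXn coefC eqxx gtn_eqF // addr0 mulr1 subrr.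
  rewrite coefB coefZ coefD coefXn coefC (gtn_eqF n_lt_j) gtn_eqF ?(ltn_trans n_gt0 n_lt_j) //.
  by rewrite addr0 mulr0 subr0 nth_default // (leq_trans size_p n_lt_j).
Qed.

Lemma coef_poly_rootsN1 (p : {poly F}) : (size p <= n.+1)%N ->
  (forall z, z ^+ n = -1 -> p.[z] = 0) ->
  (forall k, (0 < k < n)%N -> p`_k = 0) /\ p`_0 = p`_n.
Proof.
move=> size_p /(poly_eq_XnD1 size_p) pE.
split=> [k /andP[k_gt0 k_lt_n]|]; rewrite [in LHS]pE coefZ coefD coefXn coef1.
  by rewrite ltn_eqF // gtn_eqF // addr0 mulr0.
by rewrite eq_sym gtn_eqF // add0r mulr1.
Qed.

End PolyVanishingOnRootsN1.

Section RootsOfMinusOne.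
Variables (R : rcfType) (n : nat).
Hypothesis n_gt0 : (0 < n)%N.
Implicit Types (z : R[i]) (p : {poly R[i]}).

Definition conj_recip p : {poly R[i]} := \poly_(k < n.+1) (p`_(n - k))^*.

Lemma coef_conj_recip p k : (k <= n)%N -> (conj_recip p)`_k = (p`_(n - k))^*.
Proof. by rewrite coef_poly ltnS => ->. Qed.

Lemma norm_rootN1 z : z ^+ n = -1 -> `|z| = 1.
Proof.
move=> zn; apply/eqP; rewrite -(pexpr_eq1 n_gt0) ?normr_ge0 //.
by rewrite -normrX zn normrN normr1.
Qed.

Lemma conjc_exp_rootN1 z k : z ^+ n = -1 -> (k <= n)%N -> z^* ^+ k = - z ^+ (n - k).
Proof.
move=> zn k_le; have zzJ : z * z^* = 1 by rewrite -sqr_normc norm_rootN1 // expr1n.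
have zk_neq0 : z ^+ k != 0.
  by rewrite expf_neq0 //; apply: contra_eq_neq zzJ => ->; rewrite mul0r eq_sym oner_neq0.
by apply: (mulfI zk_neq0); rewrite -exprMn zzJ expr1n mulrN -exprD subnKC // zn opprK.
Qed.

Lemma horner_conj_recip_rootN1 p z : (size p <= n.+1)%N -> z ^+ n = -1 ->
  (conj_recip p).[z] = - p.[z]^*.
Proof.
move=> size_p zn; rewrite horner_poly (horner_coef_wide _ size_p) rmorph_sum -sumrN.
rewrite [RHS](reindex_inj rev_ord_inj) /=; apply: eq_bigr => k _.
rewrite subSS rmorphM rmorphXn /= conjc_exp_rootN1 ?leq_subr //.
by rewrite subKn ?mulrN ?opprK // -ltnS.
Qed.

Lemma Re_gt0_disk_rootsN1_coef p : (size p <= n.+1)%N ->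
  (forall z, `|z| < 1 -> 0 < Re p.[z]) -> (forall z, z ^+ n = -1 -> Re p.[z] = 0) ->
  (forall k, (0 < k < n)%N -> p`_k = 0) /\ Re p`_0 = Re p`_n.
Proof.
move=> size_p Re_gt0 Re_rootsN1.
have n_neq0 : n%:R != 0 :> R[i] by rewrite pnatr_eq0 -lt0n.
pose D := p^`() * 'X; have size_D : (size D <= n.+1)%N := leq_trans (size_derivMX p) size_p.
pose A := p - conj_recip p; pose B := D + conj_recip D.
have size_A : (size A <= n.+1)%N.
  by rewrite (leq_trans (size_polyD _ _)) // geq_max size_polyN size_p size_poly.
have size_B : (size B <= n.+1)%N.
  by rewrite (leq_trans (size_polyD _ _)) // geq_max size_D size_poly.
have A_rootsN1 z : z ^+ n = -1 -> A.[z] = 0.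
  move=> zn; rewrite hornerD hornerN horner_conj_recip_rootN1 // opprK addcJ.
  by rewrite Re_rootsN1 // rmorph0 mulr0.
have B_rootsN1 z : z ^+ n = -1 -> B.[z] = 0.
  move=> zn; rewrite hornerD horner_conj_recip_rootN1 // subcJ hornerMX.
  rewrite Im_derivM_Re_min_unit_circle ?norm_rootN1 ?Re_rootsN1 ?rmorph0 ?mulr0 ?mul0r //.
  exact: Re_horner_ge0_unit_circle.
have [A_mid A_ends] := coef_poly_rootsN1 n_neq0 size_A A_rootsN1.
have [B_mid _] := coef_poly_rootsN1 n_neq0 size_B B_rootsN1.
split=> [k k_mid|].
  have k_le : (k <= n)%N by case/andP: k_mid => _ /ltnW.
  have := A_mid k k_mid; have := B_mid k k_mid.
  rewrite coefD coefB !coef_conj_recip // !coef_derivMX.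
  move=> B_k /eqP; rewrite subr_eq0 => /eqP pJ_k.
  move: B_k; rewrite rmorphMn /= -pJ_k -mulrnDr subnKC // => /eqP.
  by rewrite mulrn_eq0 gtn_eqF //= => /eqP.
move: A_ends; rewrite !coefB !coef_conj_recip // subn0 subnn.
by move=> /(congr1 (@complex.Re R)); rewrite !raddfB /= !Re_conjc; lra.
Qed.

End RootsOfMinusOne.

Section ExtremalH.
Variables (R : rcfType) (n : nat) (h0 : R) (h : nat -> R[i]).
Hypothesis n_gt0 : (0 < n)%N.

Definition coefH k := if k == 0%N then h0%:C else 2 * h k.

Definition polyH : {poly R[i]} := \poly_(k < n.+1) coefH k.

Lemma horner_polyH z : Hpoly n h0 h z = polyH.[z].
Proof.
rewrite horner_poly big_ord_recl /= expr0 mulr1 /coefH /=; congr (_ + _).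
by rewrite mulr_sumr big_add1 /= big_mkord; apply: eq_bigr => k _; rewrite mulrA.
Qed.

Lemma Hpoly_binomial : (forall k, (0 < k < n)%N -> h k = 0) ->
  forall z, Hpoly n h0 h z = h0%:C + 2 * h n * z ^+ n.
Proof.
move=> h_mid z; rewrite /Hpoly big_nat_recr //= big1_seq ?add0r ?mulrA //.
by move=> k /andP[_]; rewrite mem_index_iota => k_mid; rewrite h_mid // mul0r.
Qed.

Lemma Hpoly_extremalE :
  (forall z, `|z| < 1 -> 0 < Re (Hpoly n h0 h z)) -> 0 < h n ->
  (forall z, z ^+ n = -1 -> Re (Hpoly n h0 h z) = 0) ->
  forall z, Hpoly n h0 h z = h0%:C * (1 + z ^+ n).
Proof.
move=> Re_gt0 hn_gt0 Re_rootsN1.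
have [r hnE] : exists r, h n = r%:C by apply/complex_realP/gtr0_real.
have [||H_mid] := Re_gt0_disk_rootsN1_coef (p := polyH) n_gt0 (size_poly _ _).
- by move=> z; rewrite -horner_polyH; apply: Re_gt0.
- by move=> z zn; rewrite -horner_polyH; apply: Re_rootsN1.
rewrite !coef_poly ltnS leq0n leqnn /coefH eqxx gtn_eqF // hnE /= => Re_ends.
have h0E : h0 = 2 * r by lra.
have h_mid k : (0 < k < n)%N -> h k = 0.
  move=> k_mid; have := H_mid k k_mid; case/andP: k_mid => k_gt0 /ltnW k_le.
  by rewrite coef_poly ltnS k_le /coefH gtn_eqF // => /eqP; rewrite mulf_eq0 pnatr_eq0 => /eqP.
by move=> z; rewrite Hpoly_binomial // hnE h0E rmorphM rmorph_nat /=; ring.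
Qed.

Hypothesis h0_gt0 : 0 < h0.

Lemma Hpoly_extremal_spec : (forall z, Hpoly n h0 h z = h0%:C * (1 + z ^+ n)) ->
  [/\ forall z, `|z| < 1 -> 0 < Re (Hpoly n h0 h z), 0 < h n
    & forall z, `|z| = 1 -> Re (Hpoly n h0 h z) = 0 <-> z ^+ n = -1].
Proof.
move=> HE; split.
- move=> z z_lt1; rewrite HE Re_realCM pmulr_rgt0 // Re_1D_gt0 //.
  by rewrite normrX exprn_ilt1 // -lt0n.
- have HpE : polyH = h0%:C *: (1 + 'X^n).
    by apply: poly_horner_inj => z; rewrite -horner_polyH HE hornerZ hornerD hornerXn hornerC.
  have := congr1 (fun q : {poly R[i]} => q`_n) HpE; rewrite /= coef_poly ltnSn /coefH gtn_eqF //.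
  rewrite coefZ coefD coef1 coefXn eqxx gtn_eqF // add0r mulr1 => hnE.
  by rewrite -(pmulr_rgt0 _ (ltr0n _ 2)) hnE -[0]/(0%:C) ltcR.
- move=> z z1; rewrite HE Re_realCM; split=> [/eqP|->].
    rewrite mulf_eq0 gt_eqF //= raddfD /= addrC addr_eq0 => /eqP.
    by apply: norm1_ReN1; rewrite normrX z1 expr1n.
  by rewrite subrr mulr0.
Qed.

End ExtremalH.

Theorem mainTheorem6 (R : realType) (n : nat) (hn1 : (1 <= n)%N) (h0 : R) (h0pos : 0 < h0)
    (h : nat -> R[i]) :
  [/\ (forall z : R[i], `|z| < 1 -> 0 < complex.Re (Hpoly n h0 h z)),
      0 < h n
    & (forall z : R[i], `|z| = 1 ->
         (complex.Re (Hpoly n h0 h z) = 0 <-> z ^+ n = -1))]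
  <-> (forall z : R[i], Hpoly n h0 h z = h0%:C * (1 + z ^+ n)).
Proof.
split=> [[Re_gt0 hn_gt0 Re_circle_eq0] | HE]; last exact: Hpoly_extremal_spec.
apply: Hpoly_extremalE => // z zn.
exact/(Re_circle_eq0 _ (norm_rootN1 hn1 zn)).
Qed.
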